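(* Let $\mathcal H$ be a complex Hilbert space, $A, B$ bounded self-adjoint operators on $\mathcal H$ and $C$ a bounded operator on $\mathcal H$. Let $M$ be a closed subspace of $\mathcal H$ invariant for $A$, $B$ and $C$, such that $\sigma(A|_{M^\perp}) \cap \sigma(B|_M) = \emptyset$ and $B|_M$ is a compact operator on $M$. If $D$ is a bounded operator on $\mathcal H$ with $AD - DB = C$, then $M$ is invariant for $D$.
   Context: $\sigma(\cdot)$ denotes the spectrum and $M^\perp$ the orthogonal complement of $M$. *)

From HB Require Import structures.
From mathcomp Require Import all_boot all_order all_algebra.
From mathcomp Require Import complex.
From mathcomp Require Import all_classical all_reals all_analysis.
Set Implicit Arguments. Unset Strict Implicit. Unset Printing Implicit Defensive.
Import Order.TTheory GRing.Theory Num.Theory ComplexField.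
Local Open Scope ring_scope.
Local Open Scope classical_set_scope.

Section Hilbert.
Variables (R : realType) (H : completeNormedModType R[i]).

(* ip is an inner product (linear in the first argument, conjugate symmetric)
   inducing the norm of H; together with completeness of H, (H, ip) is a
   complex Hilbert space. *)
Definition is_inner_product (ip : H -> H -> R[i]) : Prop :=
  [/\ forall (a : R[i]) (x y z : H), ip (a *: x + y) z = a * ip x z + ip y z,
      forall x y : H, ip y x = conjc (ip x y)
    & forall x : H, ip x x = `|x| ^+ 2].

Definition bounded_op (T : {linear H -> H}) : Prop := continuous T.

Definition self_adjoint (ip : H -> H -> R[i]) (T : H -> H) : Prop :=
  forall x y : H, ip (T x) y = ip x (T y).

Definition closed_subspace (M : set H) : Prop :=
  [/\ closed M, M 0,
      forall x y, M x -> M y -> M (x + y)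
    & forall (a : R[i]) x, M x -> M (a *: x)].

Definition is_invariant (M : set H) (T : H -> H) : Prop :=
  forall x, M x -> M (T x).

Definition orth (ip : H -> H -> R[i]) (M : set H) : set H :=
  [set x | forall m, M m -> ip m x = 0].

(* lam is in the resolvent set of T|_N (N an is_invariant closed subspace):
   lam - T|_N has a bounded linear two-sided inverse on N. *)
Definition resolvent_on (N : set H) (T : H -> H) (lam : R[i]) : Prop :=
  exists S : H -> H,
    (forall x, N x -> N (S x)) /\
    [/\ forall x y, N x -> N y -> S (x + y) = S x + S y,
        forall (a : R[i]) x, N x -> S (a *: x) = a *: S x,
        (exists k : R[i], forall x, N x -> `|S x| <= k * `|x|),
        forall x, N x -> S (lam *: x - T x) = x
      & forall x, N x -> lam *: S x - T (S x) = x].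

Definition spectrum_on (N : set H) (T : H -> H) : set R[i] :=
  [set lam | ~ resolvent_on N T lam].

Definition compact_on (M : set H) (T : H -> H) : Prop :=
  compact (closure (T @` [set x | M x /\ `|x| <= 1])).

End Hilbert.

From HB Require Import structures.
From mathcomp Require Import all_boot all_order all_algebra.
From mathcomp Require Import complex.
From mathcomp Require Import all_classical all_reals all_analysis.
From mathcomp Require Import ring lra.
Set Implicit Arguments. Unset Strict Implicit. Unset Printing Implicit Defensive.
Import Order.TTheory GRing.Theory Num.Theory ComplexField.
Local Open Scope ring_scope.
Local Open Scope classical_set_scope.
Local Open Scope complex_scope.

(* Let K = {v in M | D v in M}: a closed subspace, B-invariant by the Sylvester
   equation.  If K <> M, then N = M /\ K^perp is a nonzero closed B-invariant
   subspace on which B is compact and self-adjoint, so B has an eigenvector v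
   in N.  Its eigenvalue lam lies in the spectrum of B|_M, so lam - A is
   invertible on M^perp.  The M^perp-component w of D v has (lam - A) w both in
   M and in M^perp, hence w = 0 and D v lies in M: v is in K /\ K^perp = {0}. *)

Lemma ge0_RRe (R : realType) (z : R[i]) : 0 <= z -> z = (complex.Re z)%:C.
Proof. by move=> z0; rewrite RRe_real // ger0_real. Qed.

Section RealNorm.
Variables (R : realType) (H : completeNormedModType R[i]).

(* The norm of [H] takes values in [R[i]]; [rnorm] is its real part, so that
   estimates can be carried out in the real closed field [R]. *)
Definition rnorm (x : H) : R := complex.Re `|x|.

Lemma rnormE x : `|x| = (rnorm x)%:C.
Proof. by rewrite /rnorm -ge0_RRe. Qed.

Lemma rnorm_ge0 x : 0 <= rnorm x.
Proof. by rewrite -ler0c -rnormE. Qed.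

Lemma rnormD x y : rnorm (x + y) <= rnorm x + rnorm y.
Proof. by rewrite -lecR rmorphD /= -!rnormE ler_normD. Qed.

Lemma rnormN x : rnorm (- x) = rnorm x.
Proof. by rewrite /rnorm normrN. Qed.

Lemma rdistC x y : rnorm (x - y) = rnorm (y - x).
Proof. by rewrite /rnorm distrC. Qed.

Lemma rnorm0 : rnorm 0 = 0.
Proof. by rewrite /rnorm normr0. Qed.

Lemma rnorm0_eq0 x : rnorm x = 0 -> x = 0.
Proof. by move=> h; apply/normr0_eq0; rewrite rnormE h. Qed.

Lemma rnorm_gt0 x : x != 0 -> 0 < rnorm x.
Proof.
by move=> x0; rewrite lt_def rnorm_ge0 andbT; apply: contra x0 => /eqP/rnorm0_eq0->.
Qed.

Lemma rnormZ (r : R) x : rnorm (r%:C *: x) = `|r| * rnorm x.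
Proof.
apply: complexI; rewrite -rnormE normrZ rnormE rmorphM /=; congr (_ * _).
by rewrite normc_def /= expr0n /= addr0 sqrtr_sqr.
Qed.

Lemma le0_small (X C : R) : 0 < C -> (forall e : R, 0 < e -> X <= C * e) -> X <= 0.
Proof.
move=> C0 h; apply/ler_addgt0Pr => e e0; rewrite add0r.
by have := h (e / C) (divr_gt0 e0 C0); rewrite mulrC divfK ?gt_eqF.
Qed.

Lemma normc_small_eq0 (z : R[i]) (C : R) :
  0 < C -> (forall e : R, 0 < e -> `|z| <= (C * e)%:C) -> z = 0.
Proof.
move=> C0 h; apply/normr0_eq0; rewrite [`|z|]ge0_RRe //.
suff -> : complex.Re `|z| = 0 by [].
apply/eqP; rewrite eq_le -ler0c -ge0_RRe // normr_ge0 andbT.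
by apply: (le0_small C0) => e e0; rewrite -lecR -ge0_RRe // h.
Qed.

Lemma rnorm_small_eq0 (x : H) (C : R) :
  0 < C -> (forall e : R, 0 < e -> rnorm x <= C * e) -> x = 0.
Proof.
by move=> C0 h; apply/normr0_eq0/(normc_small_eq0 C0) => e e0; rewrite normr_id rnormE lecR h.
Qed.

Lemma ball_rnorm (p a : H) (e : R) : ball p e%:C a <-> rnorm (p - a) < e.
Proof. by rewrite -ball_normE /= rnormE ltcR. Qed.

Lemma closure_rnormP (A : set H) p : closure A p ->
  forall e : R, 0 < e -> exists2 a, A a & rnorm (p - a) < e.
Proof.
move=> clp e e0.
by have [a [Aa /ball_rnorm]] := clp _ (nbhsx_ballx p e%:C ltac:(by rewrite ltcR)); exists a.
Qed.

Lemma closed_rnormP (A : set H) p : closed A ->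
  (forall e : R, 0 < e -> exists2 a, A a & rnorm (p - a) < e) -> A p.
Proof.
move=> cA h; rewrite (closure_id A).1 //; move=> B /nbhs_ballP [e /= e0 eB].
have ep : 0 < complex.Re e by rewrite -ltcR -ge0_RRe // ltW.
have [a Aa pa] := h _ ep; exists a; split => //; apply: eB.
by rewrite [e]ge0_RRe ?ltW // ball_rnorm.
Qed.

Lemma cauchy_rnorm_cvg (u : nat -> H) :
  (forall e : R, 0 < e -> exists N, forall m n, (N <= m)%N -> (N <= n)%N ->
     rnorm (u m - u n) < e) ->
  exists l, forall e : R, 0 < e -> exists N, forall n, (N <= n)%N -> rnorm (l - u n) < e.
Proof.
move=> hc; have cu : cauchy (u @ \oo).
  apply/cauchy_ballP => e e0.
  have ep : 0 < complex.Re e by rewrite -ltcR -ge0_RRe // ltW.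
  have [N hN] := hc _ ep.
  exists (u @` [set n | (N <= n)%N], u @` [set n | (N <= n)%N]).
    by split; exists N => // n /= Nn; exists n.
  move=> [x y] [/= [m Nm <-] [n Nn <-]].
  by rewrite [e]ge0_RRe ?ltW // ball_rnorm; apply: hN.
have [l hl] := (cvg_ex (u @ \oo)).1 (cauchy_cvg _ cu).
exists l => e e0; have [N _ hN] := (cvgrPdist_lt _ _).1 hl e%:C ltac:(by rewrite ltcR).
by exists N => n Nn; have := hN n Nn; rewrite /= rnormE ltcR.
Qed.

Lemma compact_cluster_rnorm (K : set H) (y : nat -> H) : compact K ->
  (forall n, K (y n)) ->
  exists u, forall e : R, 0 < e -> forall N, exists2 n, (N <= n)%N & rnorm (u - y n) < e.
Proof.
move=> cK yK; have Fy : (y @ \oo) K by exists 0%N => // n _; apply: yK.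
have [u [_ cu]] := cK (y @ \oo) _ Fy.
exists u => e e0 N.
have [z [[n Nn <-] /ball_rnorm ?]] := cu (y @` [set n | (N <= n)%N]) (ball u e%:C)
  ltac:(by exists N => // m /= Nm; exists m) (nbhsx_ballx u e%:C ltac:(by rewrite ltcR)).
by exists n.
Qed.

Lemma continuous_linear_rbound (T : {linear H -> H}) : continuous T ->
  exists2 b : R, 0 < b & forall x, rnorm (T x) <= b * rnorm x.
Proof.
move=> cT; have [M [Mr hM]] := (linear_boundedP T).1 ((linear_bounded_continuous T).2 cT).
exists (`|complex.Re M| + 1); first by rewrite ltr_pwDr // normr_ge0.
move=> x; have := hM (`|complex.Re M| + 1)%:C.
rewrite -[M]RRe_real // ltcR ltr_pwDr ?normr_ge0 ?real_ler_norm ?num_real //.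
by move=> /(_ isT x); rewrite !rnormE -rmorphM lecR.
Qed.

End RealNorm.

Lemma natr_inv_lt (R : realType) (g : R) : 0 < g ->
  exists N, forall n, (N <= n)%N -> n.+1%:R^-1 < g.
Proof.
move=> g0; exists (Num.truncn g^-1) => n Nn.
have h : g^-1 < n.+1%:R by apply: (lt_le_trans (truncnS_gt g^-1)); rewrite ler_nat ltnS.
by rewrite -ltf_pV2 ?invrK // posrE ?invr_gt0 // ltr0Sn.
Qed.

Section InnerProduct.
Variables (R : realType) (H : completeNormedModType R[i]) (ip : H -> H -> R[i]).
Hypothesis ipP : is_inner_product ip.

Lemma ipDZl a x y z : ip (a *: x + y) z = a * ip x z + ip y z.
Proof. by case: ipP. Qed.

Lemma ipC x y : ip y x = (ip x y)^*.
Proof. by case: ipP. Qed.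

Lemma ipxx x : ip x x = (rnorm x ^+ 2)%:C.
Proof. by case: ipP => _ _ ->; rewrite rnormE rmorphXn. Qed.

Lemma ip0l z : ip 0 z = 0.
Proof.
by have := ipDZl 1 0 0 z; rewrite scaler0 addr0 mul1r -{1}[ip 0 z]addr0 => /addrI <-.
Qed.

Lemma ipDl x y z : ip (x + y) z = ip x z + ip y z.
Proof. by rewrite -[x]scale1r ipDZl mul1r scale1r. Qed.

Lemma ipZl a x z : ip (a *: x) z = a * ip x z.
Proof. by rewrite -[a *: x]addr0 ipDZl ip0l addr0. Qed.

Lemma ipNl x z : ip (- x) z = - ip x z.
Proof. by rewrite -scaleN1r ipZl mulN1r. Qed.

Lemma ipBl x y z : ip (x - y) z = ip x z - ip y z.
Proof. by rewrite ipDl ipNl. Qed.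

Lemma ip0r z : ip z 0 = 0.
Proof. by rewrite ipC ip0l conjc0. Qed.

Lemma ipDr x y z : ip z (x + y) = ip z x + ip z y.
Proof. by rewrite ipC ipDl rmorphD /= -!ipC. Qed.

Lemma ipZr a x z : ip z (a *: x) = a^* * ip z x.
Proof. by rewrite ipC ipZl rmorphM /= -ipC. Qed.

Lemma ipNr x z : ip z (- x) = - ip z x.
Proof. by rewrite -scaleN1r ipZr rmorphN rmorph1 mulN1r. Qed.

Lemma ipBr x y z : ip z (x - y) = ip z x - ip z y.
Proof. by rewrite ipDr ipNr. Qed.

Lemma ipxx_ge0 x : 0 <= ip x x.
Proof. by rewrite ipxx ler0c sqr_ge0. Qed.

Lemma ipxx_eq0 x : ip x x = 0 -> x = 0.
Proof. by rewrite ipxx => /complexI/eqP; rewrite sqrf_eq0 => /eqP/rnorm0_eq0. Qed.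

Lemma ipxx_gt0 x : x != 0 -> 0 < ip x x.
Proof.
by move=> x0; rewrite lt_def ipxx_ge0 andbT; apply: contra x0 => /eqP/ipxx_eq0->.
Qed.

Lemma ip_subZ_expand z y t : ip (z - t *: y) (z - t *: y) =
  ip z z - t^* * ip z y - t * ip y z + t * t^* * ip y y.
Proof. by rewrite ipBl !ipBr !ipZl !ipZr; ring. Qed.

Lemma ip_sub_proj z y : y != 0 ->
  ip (z - (ip z y / ip y y) *: y) (z - (ip z y / ip y y) *: y) =
  ip z z - ip z y * (ip z y)^* / ip y y.
Proof.
move=> y0; have yy0 : ip y y != 0 by rewrite gt_eqF ?ipxx_gt0.
rewrite ip_subZ_expand (ipC z y) rmorphM /= fmorphV /=.
(* [field] needs the two spellings of conjugation to agree syntactically. *)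
rewrite -[conjc (ip z y)]/(Num.conj (ip z y)).
have -> : Num.conj (ip y y) = ip y y by rewrite ipxx; exact: conjc_real.
by field.
Qed.

Lemma cauchy_schwarz z y : `|ip z y| <= (rnorm z * rnorm y)%:C.
Proof.
have [->|y0] := eqVneq y 0; first by rewrite ip0r normr0 ler0c mulr_ge0 ?rnorm_ge0.
have yy_gt0 := ipxx_gt0 y0.
have := ipxx_ge0 (z - (ip z y / ip y y) *: y).
rewrite ip_sub_proj // subr_ge0 ler_pdivrMr // -sqr_normc => h.
rewrite -(@ler_pXn2r _ 2) // ?nnegrE ?ler0c ?mulr_ge0 ?rnorm_ge0 //.
by apply: (le_trans h); rewrite !ipxx -rmorphM -rmorphXn /= exprMn.
Qed.

Lemma ip_eq0_of_min z y :
  (forall t, ip z z <= ip (z - t *: y) (z - t *: y)) -> ip z y = 0.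
Proof.
move=> zmin; have [->|y0] := eqVneq y 0; first exact: ip0r.
have := zmin (ip z y / ip y y).
rewrite ip_sub_proj // -subr_ge0 addrAC subrr sub0r oppr_ge0 => le0.
have ge0 : 0 <= ip z y * (ip z y)^* / ip y y.
  by rewrite divr_ge0 ?mulcJ_ge0 ?ipxx_ge0.
have /eqP := le_anti (introT andP (conj le0 ge0)).
by rewrite mulf_eq0 invr_eq0 (gt_eqF (ipxx_gt0 y0)) orbF mulf_eq0 conjc_eq0 orbb => /eqP.
Qed.

Lemma parallelogram (a b : H) :
  rnorm (a + b) ^+ 2 + rnorm (a - b) ^+ 2 = 2 * rnorm a ^+ 2 + 2 * rnorm b ^+ 2.
Proof.
apply: complexI; rewrite !mulr_natl [LHS]rmorphD [RHS]rmorphD !rmorphMn /= -!ipxx.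
by rewrite !ipDl !ipDr !ipNl !ipNr; ring.
Qed.

End InnerProduct.

Section ClosedSubspace.
Variables (R : realType) (H : completeNormedModType R[i]) (M : set H).
Hypothesis Ms : closed_subspace M.

Lemma subspace0 : M 0.
Proof. by case: Ms. Qed.

Lemma subspaceD x y : M x -> M y -> M (x + y).
Proof. by case: Ms => _ _ + _; apply. Qed.

Lemma subspaceZ a x : M x -> M (a *: x).
Proof. by case: Ms => _ _ _; apply. Qed.

Lemma subspaceN x : M x -> M (- x).
Proof. by rewrite -scaleN1r; apply: subspaceZ. Qed.

Lemma subspaceB x y : M x -> M y -> M (x - y).
Proof. by move=> Mx My; apply/subspaceD/subspaceN. Qed.

End ClosedSubspace.

Section SubspaceConstructions.
Variables (R : realType) (H : completeNormedModType R[i]).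

Lemma closed_subspaceI (M N : set H) :
  closed_subspace M -> closed_subspace N -> closed_subspace (M `&` N).
Proof.
move=> Ms Ns; split; first by apply: closedI; [case: Ms | case: Ns].
- by split; apply: subspace0.
- by move=> x y [Mx Nx] [My Ny]; split; apply: subspaceD.
- by move=> a x [Mx Nx]; split; apply: subspaceZ.
Qed.

Lemma closed_subspace_preimage (T : {linear H -> H}) (M : set H) :
  continuous T -> closed_subspace M -> closed_subspace (T @^-1` M).
Proof.
move=> cT Ms; split.
- by apply: preimage_closed; [move=> x _; apply: cT | case: Ms].
- by rewrite /preimage /= linear0; apply: subspace0.
- by move=> x y Mx My; rewrite /preimage /= linearD; apply: subspaceD.
- by move=> a x Mx; rewrite /preimage /= linearZ; apply: subspaceZ.
Qed.

Lemma is_invariantI (M N : set H) (T : H -> H) :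
  is_invariant M T -> is_invariant N T -> is_invariant (M `&` N) T.
Proof. by move=> MT NT x [Mx Nx]; split; [apply: MT | apply: NT]. Qed.

End SubspaceConstructions.

Section Orthogonal.
Variables (R : realType) (H : completeNormedModType R[i]) (ip : H -> H -> R[i]).
Hypothesis ipP : is_inner_product ip.

Lemma closed_subspace_orth (S : set H) : closed_subspace (orth ip S).
Proof.
split.
- rewrite closure_id; apply/seteqP; split; first exact: subset_closure.
  move=> p clp m Sm.
  have C0 : 0 < rnorm m + 1 by rewrite ltr_wpDl ?rnorm_ge0.
  apply: (normc_small_eq0 C0) => e e0.
  have [a Sa pa] := closure_rnormP clp e0.
  rewrite -[ip m p]subr0 -(Sa m Sm) -(ipBr ipP).
  apply: (le_trans (cauchy_schwarz ipP _ _)); rewrite lecR.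
  by have := rnorm_ge0 m; have := rnorm_ge0 (p - a); nra.
- by move=> m _; rewrite (ip0r ipP).
- by move=> x y Sx Sy m Sm; rewrite (ipDr ipP) Sx // Sy // addr0.
- by move=> a x Sx m Sm; rewrite (ipZr ipP) Sx // mulr0.
Qed.

Lemma orth_invariant (S : set H) (T : H -> H) :
  self_adjoint ip T -> is_invariant S T -> is_invariant (orth ip S) T.
Proof. by move=> sT ST x Sx m Sm; rewrite -sT Sx //; apply: ST. Qed.

Lemma orth_eq0 (S : set H) x : S x -> orth ip S x -> x = 0.
Proof. by move=> Sx /(_ x Sx); apply: ipxx_eq0. Qed.

End Orthogonal.

Section Projection.
Variables (R : realType) (H : completeNormedModType R[i]) (ip : H -> H -> R[i]).
Hypothesis ipP : is_inner_product ip.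

Lemma parallelogram_sub_sqr_le (x a b : H) (d g : R) : 0 <= d -> 0 <= g ->
  d <= rnorm (x - 2^-1%:C *: (a + b)) ->
  rnorm (x - a) <= d + g -> rnorm (x - b) <= d + g ->
  rnorm (a - b) ^+ 2 <= 8 * d * g + 4 * g ^+ 2.
Proof.
move=> d0 g0 dmid xa xb; have := parallelogram ipP (x - a) (x - b).
have -> : x - a + (x - b) = 2%:C *: (x - 2^-1%:C *: (a + b)).
  rewrite scalerBr scalerA -rmorphM /= mulfV ?pnatr_eq0 // scale1r.
  by rewrite -[2%:C]/((1 + 1)%:C) rmorphD /= rmorph1 scalerDl scale1r opprD addrACA.
have -> : x - a - (x - b) = b - a by rewrite opprB addrC addrA subrK.
rewrite rnormZ ger0_norm // (rdistC b a).
have sqr_le (u v : R) : 0 <= u -> u <= v -> u ^+ 2 <= v ^+ 2.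
  by move=> u0 uv; rewrite ler_pXn2r ?nnegrE //; lra.
have := sqr_le _ _ (rnorm_ge0 _) xa; have := sqr_le _ _ (rnorm_ge0 _) xb.
have := sqr_le _ _ d0 dmid; nra.
Qed.

Lemma minimizing_seq_cauchy (K : set H) (x : H) (d : R) (k_ : nat -> H) :
  closed_subspace K -> 0 <= d -> (forall k, K k -> d <= rnorm (x - k)) ->
  (forall n, K (k_ n)) -> (forall n, rnorm (x - k_ n) < d + n.+1%:R^-1) ->
  forall e : R, 0 < e -> exists N, forall m n, (N <= m)%N -> (N <= n)%N ->
    rnorm (k_ m - k_ n) < e.
Proof.
move=> Ks d0 dK Kk kd e e0.
pose g := Num.min 1 (e ^+ 2 / (8 * d + 8)).
have g0 : 0 < g by rewrite lt_min ltr01 divr_gt0 ?exprn_gt0 //; lra.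
have g1 : g <= 1 by rewrite ge_min lexx.
have ge : g * (8 * d + 8) <= e ^+ 2.
  by rewrite -ler_pdivlMr; [rewrite ge_min lexx orbT | lra].
clearbody g; have [N gN] := natr_inv_lt g0; exists N => m n Nm Nn.
have kg i : (N <= i)%N -> rnorm (x - k_ i) <= d + g.
  by move=> Ni; apply/ltW/(lt_trans (kd i)); rewrite ltrD2l; apply: gN.
have := parallelogram_sub_sqr_le d0 (ltW g0)
  (dK _ (subspaceZ Ks _ (subspaceD Ks (Kk m) (Kk n)))) (kg m Nm) (kg n Nn) => le_g.
have gg : g ^+ 2 <= g by rewrite expr2 ger_pMl.
have : rnorm (k_ m - k_ n) ^+ 2 < e ^+ 2 by lra.
by rewrite ltr_pXn2r ?nnegrE ?rnorm_ge0 ?ltW.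
Qed.

Lemma exists_rnorm_minimizer (K : set H) (x : H) : closed_subspace K ->
  exists2 l, K l & forall k, K k -> rnorm (x - l) <= rnorm (x - k).
Proof.
move=> Ks; pose E := [set rnorm (x - k) | k in K].
have E_lb : has_lbound E by exists 0 => _ [k _ <-]; apply: rnorm_ge0.
have E_inf : has_inf E by split => //; exists (rnorm (x - 0)), 0 => //; apply: subspace0.
have dK k : K k -> inf E <= rnorm (x - k) by move=> Kk; apply: ge_inf => //; exists k.
have d0 : 0 <= inf E by apply: lb_le_inf; [case: E_inf | move=> _ [k _ <-]; apply: rnorm_ge0].
have near_inf n : exists k, K k /\ rnorm (x - k) < inf E + n.+1%:R^-1.
  have n_gt0 : 0 < n.+1%:R^-1 :> R by rewrite invr_gt0 ltr0Sn.
  have [_ [k Kk <-] ?] := inf_adherent n_gt0 E_inf.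
  by exists k.
have [k_ /all_and2 [Kk_ kd]] := choice near_inf.
have [l kl] := cauchy_rnorm_cvg (minimizing_seq_cauchy Ks d0 dK Kk_ kd).
have Kl : K l.
  apply: (closed_rnormP (A := K)); first by case: Ks.
  by move=> e e0; have [N kN] := kl e e0; exists (k_ N) => //; apply: kN.
exists l => // k Kk; apply: le_trans (dK k Kk); apply/ler_addgt0Pr => e e0.
have e2 : 0 < e / 2 by rewrite divr_gt0.
have [N1 kN1] := kl _ e2; have [N2 N2e] := natr_inv_lt e2.
pose n := maxn N1 N2; have := rnormD (x - k_ n) (k_ n - l).
rewrite addrA subrK (rdistC (k_ n)); have := kN1 n (leq_maxl _ _).
(* [set] merges the two instance paths of [n.+1%:R^-1], which [lra] would
   otherwise treat as distinct atoms. *)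
have := N2e n (leq_maxr _ _); have := kd n; set t := n.+1%:R^-1; lra.
Qed.

Lemma orth_of_minimizer (K : set H) (x l : H) : closed_subspace K -> K l ->
  (forall k, K k -> rnorm (x - l) <= rnorm (x - k)) -> orth ip K (x - l).
Proof.
move=> Ks Kl lmin k Kk; rewrite (ipC ipP) (ip_eq0_of_min ipP) ?conjc0 // => t.
rewrite !(ipxx ipP) lecR -addrA -opprD ler_pXn2r ?nnegrE ?rnorm_ge0 //.
exact/lmin/(subspaceD Ks Kl)/(subspaceZ Ks).
Qed.

Lemma orth_proj_exists (K : set H) (x : H) : closed_subspace K ->
  exists2 k, K k & orth ip K (x - k).
Proof.
move=> Ks; have [l Kl lmin] := exists_rnorm_minimizer x Ks.
by exists l => //; apply: orth_of_minimizer.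
Qed.

End Projection.

Lemma small_of_sqr_le_inv (R : realType) (f : nat -> R) (c : R) :
  0 <= c -> (forall n, 0 <= f n) -> (forall n, f n ^+ 2 <= c * n.+1%:R^-1) ->
  forall e : R, 0 < e -> exists N, forall n, (N <= n)%N -> f n < e.
Proof.
move=> c0 f0 fc e e0; have g0 : 0 < e ^+ 2 / (c + 1) by rewrite divr_gt0 ?exprn_gt0 //; lra.
have [N gN] := natr_inv_lt g0; exists N => n Nn.
rewrite -(ltr_pXn2r (n := 2)) ?nnegrE ?f0 ?ltW //; apply: (le_lt_trans (fc n)).
have t0 : 0 < n.+1%:R^-1 :> R by rewrite invr_gt0 ltr0Sn.
have := gN n Nn; rewrite ltr_pdivlMr; last by lra.
by move: t0; set t := n.+1%:R^-1; nra.
Qed.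

Section Eigenvector.
Variables (R : realType) (H : completeNormedModType R[i]).

Lemma exists_op_rnorm_on (T : {linear H -> H}) (N : set H) :
  continuous T -> closed_subspace N ->
  exists s : R, [/\ 0 <= s, forall w, N w -> rnorm (T w) <= s * rnorm w
    & forall e : R, 0 < e -> exists w, [/\ N w, rnorm w <= 1 & s - e < rnorm (T w)]].
Proof.
move=> cT Ns; have [b b0 Tb] := continuous_linear_rbound cT.
pose S := [set rnorm (T w) | w in [set w | N w /\ rnorm w <= 1]].
have S_sup : has_sup S.
  split; first by exists (rnorm (T 0)), 0; split; [apply: subspace0 | rewrite rnorm0 ler01].
  exists b => _ [w [_ w1] <-]; apply: (le_trans (Tb w)).
  by rewrite -[leRHS]mulr1 ler_pM2l.
exists (sup S); split.
- apply: (le_trans (rnorm_ge0 (T 0))); apply: ub_le_sup; first by case: S_sup.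
  by exists 0 => //; split; [apply: subspace0 | rewrite rnorm0 ler01].
- move=> w Nw; have [->|w0] := eqVneq w 0; first by rewrite linear0 rnorm0 mulr0.
  have w_gt0 := rnorm_gt0 w0.
  have : S (rnorm (T ((rnorm w)^-1%:C *: w))).
    exists ((rnorm w)^-1%:C *: w) => //; split; first exact: subspaceZ.
    by rewrite rnormZ ger0_norm ?invr_ge0 ?rnorm_ge0 // mulVf ?gt_eqF.
  move/(ub_le_sup (proj2 S_sup)); rewrite linearZ /= rnormZ ger0_norm ?invr_ge0 ?rnorm_ge0 //.
  by rewrite mulrC ler_pdivrMr // mulrC.
- move=> e e0; have [_ [w [Nw w1] <-] ?] := sup_adherent e0 S_sup.
  by exists w.
Qed.

Lemma eigenvector_of_sqr (T : {linear H -> H}) (N : set H) (u : H) (c : R[i]) :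
  closed_subspace N -> is_invariant N T -> N u -> u != 0 -> T (T u) = c ^+ 2 *: u ->
  exists v lam, [/\ N v, v != 0 & T v = lam *: v].
Proof.
move=> Ns NT Nu u0 TTu; pose w := T u + c *: u.
have [w0|w0] := eqVneq w 0.
  exists u, (- c); split => //.
  by apply/eqP; rewrite scaleNr -subr_eq0 opprK -/w w0.
exists w, c; split => //; first by apply: subspaceD => //; [apply: NT | apply: subspaceZ].
by rewrite /w linearD linearZ /= TTu scalerDr scalerA -expr2 addrC.
Qed.

Lemma cluster_in_kernel (T : H -> H) (b : R) (y : nat -> H) (u : H) :
  0 < b -> (forall x z, T (x - z) = T x - T z) -> (forall x, rnorm (T x) <= b * rnorm x) ->
  (forall e : R, 0 < e -> forall N, exists2 n, (N <= n)%N & rnorm (u - y n) < e) ->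
  (forall e : R, 0 < e -> exists N, forall n, (N <= n)%N -> rnorm (T (y n)) < e) ->
  T u = 0.
Proof.
move=> b0 TB Tb yu Ty0; have b1 : 0 < b + 1 by lra.
apply: (rnorm_small_eq0 b1) => e e0.
have [N TyN] := Ty0 e e0; have [n Nn uyn] := yu e e0 N.
have := rnormD (T (u - y n)) (T (y n)); rewrite {1}TB subrK.
have := Tb (u - y n); have := TyN n Nn; nra.
Qed.

Variable ip : H -> H -> R[i].
Hypothesis ipP : is_inner_product ip.

Lemma rnorm_sqr_approx_eigen (T : H -> H) (w : H) (s t : R) :
  self_adjoint ip T -> 0 <= s -> rnorm w <= 1 -> rnorm (T w) <= s ->
  rnorm (T (T w)) <= s * rnorm (T w) -> s - t <= rnorm (T w) ->
  rnorm (T (T w) - (s ^+ 2)%:C *: w) ^+ 2 <= 2 * s ^+ 3 * t.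
Proof.
move=> sT s0 w1 Tws TTw Twt.
have -> : rnorm (T (T w) - (s ^+ 2)%:C *: w) ^+ 2 =
    rnorm (T (T w)) ^+ 2 - 2 * s ^+ 2 * rnorm (T w) ^+ 2 + s ^+ 4 * rnorm w ^+ 2.
  apply: complexI; rewrite -(ipxx ipP) (ipBl ipP) !(ipBr ipP) !(ipZl ipP) !(ipZr ipP).
  have sR : Num.conj ((s ^+ 2)%:C) = (s ^+ 2)%:C := conjc_real _.
  rewrite (sT (T w) w) -(sT w (T w)) sR !(ipxx ipP).
  by rewrite !rmorphD !rmorphN !rmorphM /= ?rmorph_nat; ring.
move: w1 Tws TTw Twt; set V := rnorm w; set Y := rnorm (T w); set Z := rnorm (T (T w)).
move=> V1 Ys ZY sY; have V0 : 0 <= V := rnorm_ge0 _; have Y0 : 0 <= Y := rnorm_ge0 _.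
have Z2 : Z ^+ 2 <= s ^+ 2 * Y ^+ 2.
  by rewrite -exprMn ler_pXn2r ?nnegrE ?rnorm_ge0 ?mulr_ge0.
have V2 : s ^+ 4 * V ^+ 2 <= s ^+ 4.
  by rewrite ler_piMr ?exprn_ge0 // -(expr1n _ 2) ler_pXn2r ?nnegrE.
have sY2 : s ^+ 2 * (s ^+ 2 - Y ^+ 2) <= s ^+ 2 * (2 * s * t).
  by rewrite ler_wpM2l ?exprn_ge0 //; nra.
have -> : s ^+ 4 = s ^+ 2 * s ^+ 2 by rewrite -exprD.
have -> : s ^+ 3 = s ^+ 2 * s by rewrite exprSr.
nra.
Qed.

(* [u] is a cluster point of [B (w_ n)] for a maximizing sequence [w_ n]. *)
Lemma compact_self_adjoint_sqr_eigenvector (B : {linear H -> H}) (M N : set H) (s : R) :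
  continuous B -> self_adjoint ip B -> compact_on M B ->
  closed_subspace N -> N `<=` M -> is_invariant N B -> 0 < s ->
  (forall w, N w -> rnorm (B w) <= s * rnorm w) ->
  (forall e : R, 0 < e -> exists w, [/\ N w, rnorm w <= 1 & s - e < rnorm (B w)]) ->
  exists u, [/\ N u, u != 0 & B (B u) = (s ^+ 2)%:C *: u].
Proof.
move=> cB sB cBM Ns NM NB s_gt0 Bs s_sup; have s0 := ltW s_gt0.
have [b b0 Bb] := continuous_linear_rbound cB.
have near_sup n : exists w, [/\ N w, rnorm w <= 1 & s - n.+1%:R^-1 < rnorm (B w)].
  by apply: s_sup; rewrite invr_gt0 ltr0Sn.
have [w_ w_P] := choice near_sup.
have w_N n : N (w_ n) by case: (w_P n).
have [u uP] : exists u, forall e : R, 0 < e -> forall K,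
    exists2 n, (K <= n)%N & rnorm (u - B (w_ n)) < e.
  apply: (compact_cluster_rnorm cBM) => n; apply: subset_closure.
  have [_ w1 _] := w_P n; exists (w_ n) => //.
  by split; [apply: NM | rewrite rnormE lecR].
exists u; split.
- apply: (closed_rnormP (A := N)); first by case: Ns.
  by move=> e e0; have [n _ ?] := uP e e0 0%N; exists (B (w_ n)); first exact: NB.
- apply/eqP => u0; have s4 : 0 < s / 4 by rewrite divr_gt0.
  have [K Ks4] := natr_inv_lt s4; have [n Kn] := uP _ s4 K.
  have [_ _] := w_P n; have := Ks4 n Kn.
  by rewrite u0 sub0r rnormN; set t := n.+1%:R^-1; lra.
have r_small : forall e : R, 0 < e -> exists K, forall n, (K <= n)%N ->
    rnorm (B (B (w_ n)) - (s ^+ 2)%:C *: w_ n) < e.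
  apply: (small_of_sqr_le_inv (c := 2 * s ^+ 3)) => [||n].
  - by rewrite mulr_ge0 ?exprn_ge0.
  - by move=> n; apply: rnorm_ge0.
  have [_ w1 sw] := w_P n; apply: rnorm_sqr_approx_eigen => //; last exact: ltW.
    by apply: (le_trans (Bs _ (w_N n))); rewrite ler_piMr.
  exact/Bs/NB/w_N.
have bs0 : 0 < b * b + s ^+ 2 by rewrite ltr_wpDr ?exprn_ge0 ?mulr_gt0.
apply/eqP; rewrite -subr_eq0; apply/eqP.
apply: (cluster_in_kernel (T := fun x => B (B x) - (s ^+ 2)%:C *: x) (y := B \o w_)
  bs0 _ _ uP) => /=.
- by move=> x z; rewrite !linearB /= addrACA.
- move=> x; apply: (le_trans (rnormD _ _)); rewrite rnormN rnormZ ger0_norm ?exprn_ge0 //.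
  rewrite mulrDl lerD2r -mulrA; apply: (le_trans (Bb _)).
  by rewrite ler_pM2l // Bb.
- move=> e e0; have [K rK] := r_small (e / b) (divr_gt0 e0 b0); exists K => n Kn.
  rewrite -linearZ -linearB; apply: (le_lt_trans (Bb _)).
  by rewrite mulrC -ltr_pdivlMr // rK.
Qed.

Lemma compact_self_adjoint_eigenvector (B : {linear H -> H}) (M N : set H) :
  continuous B -> self_adjoint ip B -> compact_on M B ->
  closed_subspace N -> N `<=` M -> is_invariant N B -> (exists2 v0, N v0 & v0 != 0) ->
  exists v lam, [/\ N v, v != 0 & B v = lam *: v].
Proof.
move=> cB sB cBM Ns NM NB [v0 Nv0 v00].
have [s [s0 Bs s_sup]] := exists_op_rnorm_on cB Ns.
have [s_eq0|s_neq0] := eqVneq s 0.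
  exists v0, 0; split => //; rewrite scale0r; apply: (rnorm_small_eq0 ltr01) => e e0.
  by rewrite mul1r (le_trans (Bs _ Nv0)) // s_eq0 mul0r ltW.
have s_gt0 : 0 < s by rewrite lt_def s_neq0 s0.
have [u [Nu u0 BBu]] :=
  compact_self_adjoint_sqr_eigenvector cB sB cBM Ns NM NB s_gt0 Bs s_sup.
by apply: (eigenvector_of_sqr (c := s%:C) Ns NB Nu u0); rewrite -rmorphXn.
Qed.

End Eigenvector.

Section Resolvent.
Variables (R : realType) (H : completeNormedModType R[i]).

Lemma resolvent_on_eq0 (N : set H) (T : H -> H) (lam : R[i]) (x : H) :
  N 0 -> resolvent_on N T lam -> N x -> lam *: x - T x = 0 -> x = 0.
Proof.
move=> N0 [S [_ [SD _ _ SK _]]] Nx x_ker.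
have S0 : S 0 = 0.
  by have := SD 0 0 N0 N0; rewrite addr0 -{1}[S 0]addr0 => /addrI <-.
by rewrite -(SK x Nx) x_ker S0.
Qed.

Lemma eigenvalue_spectrum_on (N : set H) (T : H -> H) (lam : R[i]) (v : H) :
  N 0 -> N v -> v != 0 -> T v = lam *: v -> spectrum_on N T lam.
Proof.
move=> N0 Nv v0 Tv res; move/eqP: v0; apply.
by apply: (resolvent_on_eq0 N0 res Nv); rewrite Tv subrr.
Qed.

End Resolvent.

Section Sylvester.
Variables (R : realType) (H : completeNormedModType R[i]) (ip : H -> H -> R[i]).
Hypothesis ipP : is_inner_product ip.
Variables (A D : {linear H -> H}) (B C : H -> H) (M : set H).
Hypotheses (Ms : closed_subspace M) (MA : is_invariant M A) (MC : is_invariant M C).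
Hypothesis sylvester : forall x, A (D x) - D (B x) = C x.

Lemma sylvester_invariant_preimage :
  is_invariant M B -> is_invariant (M `&` D @^-1` M) B.
Proof.
move=> MB v [Mv MDv]; split; first exact: MB.
rewrite /preimage /=; have -> : D (B v) = A (D v) - C v by rewrite -sylvester opprB addrC subrK.
by apply: subspaceB => //; [apply: MA | apply: MC].
Qed.

(* Write [D v = m + w] with [m] in [M] and [w] orthogonal to [M]: then
   [(lam - A) w] lies both in [M] and in [M^perp], so it vanishes. *)
Lemma sylvester_eigenvector_invariant (v : H) (lam : R[i]) :
  self_adjoint ip A -> resolvent_on (orth ip M) A lam ->
  M v -> B v = lam *: v -> M (D v).
Proof.
move=> sA res Mv Bv; have [m Mm w_orth] := orth_proj_exists ipP (D v) Ms.
set w := D v - m in w_orth.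
have w_img : A w - lam *: w = C v - (A m - lam *: m).
  have DBv : D (B v) = lam *: D v by rewrite Bv linearZ.
  by rewrite -sylvester DBv /w (raddfB A) scalerBr opprD addrACA -opprD.
have w_ker : lam *: w - A w = 0.
  rewrite -opprB; apply/eqP; rewrite oppr_eq0; apply/eqP.
  apply: (orth_eq0 ipP (S := M)).
    rewrite w_img; apply: (subspaceB Ms); first exact: MC.
    by apply: (subspaceB Ms); [apply: MA | apply: (subspaceZ Ms)].
  apply: (subspaceB (closed_subspace_orth ipP M)); first exact: (orth_invariant sA MA).
  exact: (subspaceZ (closed_subspace_orth ipP M)).
have w0 : w = 0.
  exact: resolvent_on_eq0 (subspace0 (closed_subspace_orth ipP M)) res w_orth w_ker.
by rewrite -[D v](subrK m) -/w w0 add0r.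
Qed.

End Sylvester.

Theorem lemma2p2 (R : realType) (H : completeNormedModType R[i])
  (ip : H -> H -> R[i]) (A B C D : {linear H -> H}) (M : set H) :
  is_inner_product ip ->
  bounded_op A -> bounded_op B -> bounded_op C -> bounded_op D ->
  self_adjoint ip A -> self_adjoint ip B ->
  closed_subspace M ->
  is_invariant M A -> is_invariant M B -> is_invariant M C ->
  spectrum_on (orth ip M) A `&` spectrum_on M B = set0 ->
  compact_on M B ->
  (forall x, A (D x) - D (B x) = C x) ->
  is_invariant M D.
Proof.
move=> ipP _ cB _ cD sA sB Ms MA MB MC spec_disj cBM sylvester x Mx.
pose K := M `&` D @^-1` M.
have Ks : closed_subspace K := closed_subspaceI Ms (closed_subspace_preimage cD Ms).
have KB : is_invariant K B := sylvester_invariant_preimage Ms MA MC sylvester MB.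
pose N := M `&` orth ip K.
have Ns : closed_subspace N := closed_subspaceI Ms (closed_subspace_orth ipP K).
have NB : is_invariant N B := is_invariantI MB (orth_invariant sB KB).
apply: contrapT => NDx.
have [k Kk xk_orth] := orth_proj_exists ipP x Ks.
have N_nontrivial : exists2 v0, N v0 & v0 != 0.
  exists (x - k); first by split => //; apply: (subspaceB Ms Mx); case: Kk.
  by apply/eqP => /subr0_eq xk; apply: NDx; rewrite xk; case: Kk.
have [v [lam [[Mv Kv_orth] v0 Bv]]] :=
  compact_self_adjoint_eigenvector ipP cB sB cBM Ns (fun _ => @proj1 _ _) NB N_nontrivial.
have res : resolvent_on (orth ip M) A lam.
  apply: contrapT => spec_A; suff : set0 lam by [].
  by rewrite -spec_disj; split => //; apply: eigenvalue_spectrum_on (subspace0 Ms) Mv v0 Bv.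
have MDv := sylvester_eigenvector_invariant ipP Ms MA MC sylvester sA res Mv Bv.
by move/eqP: v0; apply; apply: (orth_eq0 ipP (S := K) (conj Mv MDv) Kv_orth).
Qed.
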